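(* Let $P_1,P_2,N>0$. If $\sigma_1^2\ge P_1\big(\frac32+\frac{P_2}{N}\big)$ and $\sigma_2^2\ge P_2\big(\frac32+\frac{P_1}{N}\big)$, then $\mathcal R_{\mathrm{Wil}}(P_1,P_2,N,\sigma_1^2,\sigma_2^2)=\mathcal C_{\mathrm{MAC}}(P_1,P_2,N)$.
   Context: For $x\in[0,1]$, $\bar x=1-x$. The region $\mathcal R_{\mathrm{Wil}}(P_1,P_2,N,\sigma_1^2,\sigma_2^2)$ (for $\sigma_1^2,\sigma_2^2\ge0$) is the set of pairs $(R_1,R_2)$ for which there exist nonnegative $R_{1,0},R_{1,1}$ with $R_{1,0}+R_{1,1}=R_1$, nonnegative $R_{2,0},R_{2,2}$ with $R_{2,0}+R_{2,2}=R_2$, and $\delta_1,\delta_2,\rho_1,\rho_2\in[0,1]$ such that $R_{1,1}\le\frac12\log(1+\frac{\delta_1P_1}{N})$; $R_{1,0}\le\frac12\log\big(1+\frac{\bar\delta_1P_1(1-\rho_1^2)}{\delta_1P_1+N+\sigma_2^2}\big)$; $R_{2,0}\le\frac12\log\big(1+\frac{\bar\delta_2P_2(1-\rho_2^2)}{\delta_2P_2+N+\sigma_1^2}\big)$; $R_{2,2}\le\frac12\log(1+\frac{\delta_2P_2}{N})$; $R_{1,1}+R_{2,2}\le\frac12\log(1+\frac{\delta_1P_1+\delta_2P_2}{N})$; $R_1+R_2\le\frac12\log\big(1+\frac{P_1+P_2+2\sqrt{\bar\delta_1\bar\delta_2P_1P_2}\rho_1\rho_2}{N}\big)$. The no-feedback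 capacity region $\mathcal C_{\mathrm{MAC}}(P_1,P_2,N)$ is the set of nonnegative $(R_1,R_2)$ with $R_1\le\frac12\log(1+\frac{P_1}{N})$, $R_2\le\frac12\log(1+\frac{P_2}{N})$, $R_1+R_2\le\frac12\log(1+\frac{P_1+P_2}{N})$. *)

From Stdlib Require Import Reals.
Open Scope R_scope.

(* (1/2) log(1+x); natural logarithm (the base only rescales all rates uniformly). *)
Definition C (x : R) : R := / 2 * ln (1 + x).

Definition in01 (x : R) : Prop := 0 <= x <= 1.

(* The region R_Wil(P1,P2,N,s1,s2), where s1 = sigma_1^2, s2 = sigma_2^2. *)
Definition R_Wil (P1 P2 N s1 s2 : R) (R1 R2 : R) : Prop :=
  exists R10 R11 R20 R22 d1 d2 r1 r2 : R,
    0 <= R10 /\ 0 <= R11 /\ R10 + R11 = R1 /\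
    0 <= R20 /\ 0 <= R22 /\ R20 + R22 = R2 /\
    in01 d1 /\ in01 d2 /\ in01 r1 /\ in01 r2 /\
    R11 <= C (d1 * P1 / N) /\
    R10 <= C ((1 - d1) * P1 * (1 - r1 ^ 2) / (d1 * P1 + N + s2)) /\
    R20 <= C ((1 - d2) * P2 * (1 - r2 ^ 2) / (d2 * P2 + N + s1)) /\
    R22 <= C (d2 * P2 / N) /\
    R11 + R22 <= C ((d1 * P1 + d2 * P2) / N) /\
    R1 + R2 <= C ((P1 + P2 + 2 * sqrt ((1 - d1) * (1 - d2) * P1 * P2) * r1 * r2) / N).

Definition C_MAC (P1 P2 N : R) (R1 R2 : R) : Prop :=
  0 <= R1 /\ 0 <= R2 /\
  R1 <= C (P1 / N) /\ R2 <= C (P2 / N) /\ R1 + R2 <= C ((P1 + P2) / N).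

From Pilot Require Import Defs.
From Stdlib Require Import Reals Lra Psatz.
Open Scope R_scope.

(* Stdlib Reals exports a binomial coefficient also named C. *)
Local Notation C := Pilot.Defs.C.

(* The inclusion C_MAC ⊆ R_Wil holds unconditionally: take d1 = d2 = 1 and
   r1 = r2 = 0, so that all rate is private and the Willems constraints reduce
   to the MAC constraints.

   For R_Wil ⊆ C_MAC write a_i = d_i P_i, x_i = (1 - d_i) P_i and let D_1, D_2
   be the denominators of the common-message SNRs q_1, q_2; since q_i <= x_i/D_i
   and C u + C v = 1/2 ln((1+u)(1+v)), every bound reduces to an elementary
   inequality between products of the form (1 + SNR):
     (1 + a/N)(1 + x/D) <= 1 + (a+x)/N                    when D >= N + a,
     (1 + (a+b)/N)(1 + x/D1)(1 + y/D2) <= 1 + (a+b+x+y)/N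
                               when D1 >= N + a + b + y and D2 >= N + a + b.
   These denominator conditions only need sigma_i^2 >= P_i, which follows from
   the hypotheses of the theorem. *)

Lemma div_nonneg u v : 0 <= u -> 0 < v -> 0 <= u / v.
Proof. intros Hu Hv. unfold Rdiv. apply Rmult_le_pos; [lra | left; apply Rinv_0_lt_compat; lra]. Qed.

Lemma ln_monotone x y : 0 < x -> x <= y -> ln x <= ln y.
Proof.
  intros Hx [Hlt | ->]; [left; apply ln_increasing; lra | lra].
Qed.

Lemma C_zero : C 0 = 0.
Proof. unfold C. rewrite Rplus_0_r, ln_1. ring. Qed.

Lemma C_monotone u v : 0 <= u -> u <= v -> C u <= C v.
Proof.
  intros Hu Huv. unfold C. apply Rmult_le_compat_l; [lra |].
  apply ln_monotone; lra.
Qed.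

Lemma C_add u v t : 0 <= u -> 0 <= v -> (1 + u) * (1 + v) <= 1 + t ->
  C u + C v <= C t.
Proof.
  intros Hu Hv Ht. unfold C.
  rewrite <- Rmult_plus_distr_l, <- ln_mult by lra.
  apply Rmult_le_compat_l; [lra |].
  apply ln_monotone; nra.
Qed.

Lemma C_add3 u v w t : 0 <= u -> 0 <= v -> 0 <= w ->
  (1 + u) * (1 + v) * (1 + w) <= 1 + t -> C u + C v + C w <= C t.
Proof.
  intros Hu Hv Hw Ht.
  assert (Huv : C u + C v <= C ((1 + u) * (1 + v) - 1)) by (apply C_add; lra).
  assert (C ((1 + u) * (1 + v) - 1) + C w <= C t) by (apply C_add; nra).
  lra.
Qed.

Lemma common_snr_bounds d P r D : 0 < D -> 0 <= P -> in01 d -> in01 r ->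
  0 <= (1 - d) * P * (1 - r ^ 2) / D <= (1 - d) * P / D.
Proof.
  intros HD HP [Hd0 Hd1] [Hr0 Hr1].
  assert (Hx : 0 <= (1 - d) * P) by nra.
  assert (Hr : 0 <= 1 - r ^ 2 <= 1) by (simpl; nra).
  assert (HiD : 0 < / D) by (apply Rinv_0_lt_compat; lra).
  unfold Rdiv. split.
  - apply Rmult_le_pos; [apply Rmult_le_pos |]; lra.
  - apply Rmult_le_compat_r; [lra |].
    rewrite <- (Rmult_1_r ((1 - d) * P)) at 2. apply Rmult_le_compat_l; lra.
Qed.

(* Single user: splitting the power P = a + x into a private part decoded
   against noise N and a common part decoded against noise D >= N + a
   cannot beat the point-to-point capacity. *)
Lemma split_power_gain a x D N : 0 < N -> 0 <= a -> 0 <= x -> N + a <= D ->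
  (1 + a / N) * (1 + x / D) <= 1 + (a + x) / N.
Proof.
  intros HN Ha Hx HD.
  assert (Gap : 1 + (a + x) / N - (1 + a / N) * (1 + x / D)
                = x * (D - (N + a)) / (N * D)) by (field; lra).
  assert (0 <= x * (D - (N + a)) / (N * D)) by (apply div_nonneg; nra).
  lra.
Qed.

(* Two users: with M = N + a + b the private-part noise level, the gap equals
   [x D2 (D1 - M) + y D1 (D2 - M) - M x y] / (N D1 D2), which is nonnegative
   because D1 - M >= y and D2 >= M. *)
Lemma sum_power_gain a b x y D1 D2 N : 0 < N ->
  0 <= a -> 0 <= b -> 0 <= x -> 0 <= y ->
  N + a + b + y <= D1 -> N + a + b <= D2 ->
  (1 + (a + b) / N) * (1 + x / D1) * (1 + y / D2) <= 1 + (a + b + x + y) / N.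
Proof.
  intros HN Ha Hb Hx Hy HD1 HD2.
  set (M := N + a + b) in *.
  assert (Gap : 1 + (a + b + x + y) / N - (1 + (a + b) / N) * (1 + x / D1) * (1 + y / D2)
                = (x * D2 * (D1 - M) + y * D1 * (D2 - M) - M * x * y) / (N * D1 * D2))
    by (unfold M in *; field; repeat split; lra).
  assert (HM : 0 < M) by (unfold M; lra).
  assert (Hcross : M * x * y <= x * D2 * (D1 - M)).
  { assert (M * y <= D2 * (D1 - M)) by (apply Rmult_le_compat; lra).
    rewrite (Rmult_comm M x), Rmult_assoc, Rmult_assoc.
    apply Rmult_le_compat_l; lra. }
  assert (Hrest : 0 <= y * D1 * (D2 - M)) by (apply Rmult_le_pos; nra).
  assert (0 <= (x * D2 * (D1 - M) + y * D1 * (D2 - M) - M * x * y) / (N * D1 * D2)).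
  { apply div_nonneg; [lra |]. apply Rmult_lt_0_compat; [apply Rmult_lt_0_compat |]; lra. }
  lra.
Qed.

Lemma single_user_rate_bound a x q D N : 0 < N -> 0 <= a -> 0 <= x -> N + a <= D ->
  0 <= q <= x / D -> C (a / N) + C q <= C ((a + x) / N).
Proof.
  intros HN Ha Hx HD Hq.
  assert (Hmono : C q <= C (x / D)) by (apply C_monotone; lra).
  assert (0 <= a / N) by (apply div_nonneg; lra).
  assert (0 <= x / D) by lra.
  assert (C (a / N) + C (x / D) <= C ((a + x) / N)) by (apply C_add; auto using split_power_gain).
  lra.
Qed.

Lemma sum_rate_bound a b x y q1 q2 D1 D2 N : 0 < N ->
  0 <= a -> 0 <= b -> 0 <= x -> 0 <= y ->
  N + a + b + y <= D1 -> N + a + b <= D2 ->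
  0 <= q1 <= x / D1 -> 0 <= q2 <= y / D2 ->
  C ((a + b) / N) + C q1 + C q2 <= C ((a + b + x + y) / N).
Proof.
  intros HN Ha Hb Hx Hy HD1 HD2 Hq1 Hq2.
  assert (C q1 <= C (x / D1)) by (apply C_monotone; lra).
  assert (C q2 <= C (y / D2)) by (apply C_monotone; lra).
  assert (0 <= (a + b) / N) by (apply div_nonneg; lra).
  assert (C ((a + b) / N) + C (x / D1) + C (y / D2) <= C ((a + b + x + y) / N))
    by (apply C_add3; auto using sum_power_gain; lra).
  lra.
Qed.

Lemma C_MAC_included_R_Wil P1 P2 N s1 s2 R1 R2 :
  C_MAC P1 P2 N R1 R2 -> R_Wil P1 P2 N s1 s2 R1 R2.
Proof.
  intros (HR1 & HR2 & Hb1 & Hb2 & Hsum).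
  exists 0, R1, 0, R2, 1, 1, 0, 0.
  unfold in01.
  replace ((1 - 1) * P1 * (1 - 0 ^ 2) / (1 * P1 + N + s2)) with 0 by (unfold Rdiv; ring).
  replace ((1 - 1) * P2 * (1 - 0 ^ 2) / (1 * P2 + N + s1)) with 0 by (unfold Rdiv; ring).
  replace ((P1 + P2 + 2 * sqrt ((1 - 1) * (1 - 1) * P1 * P2) * 0 * 0) / N)
    with ((P1 + P2) / N) by (unfold Rdiv; ring).
  rewrite !Rmult_1_l, C_zero.
  repeat split; lra.
Qed.

Lemma R_Wil_included_C_MAC P1 P2 N s1 s2 R1 R2 :
  0 < N -> 0 <= P1 -> 0 <= P2 -> P1 <= s1 -> P2 <= s2 ->
  R_Wil P1 P2 N s1 s2 R1 R2 -> C_MAC P1 P2 N R1 R2.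
Proof.
  intros HN HP1 HP2 Hs1 Hs2
    (R10 & R11 & R20 & R22 & d1 & d2 & r1 & r2 & HR10 & HR11 & E1 & HR20 & HR22 & E2 &
     Hd1 & Hd2 & Hr1 & Hr2 & B11 & B10 & B20 & B22 & Bpriv & _).
  pose proof Hd1 as [Hd10 Hd11]. pose proof Hd2 as [Hd20 Hd21].
  assert (Ha1 : 0 <= d1 * P1) by nra. assert (Hx1 : 0 <= (1 - d1) * P1) by nra.
  assert (Ha2 : 0 <= d2 * P2) by nra. assert (Hx2 : 0 <= (1 - d2) * P2) by nra.
  set (D1 := d1 * P1 + N + s2) in *. set (D2 := d2 * P2 + N + s1) in *.
  assert (Hq1 := common_snr_bounds d1 P1 r1 D1 ltac:(unfold D1; lra) HP1 Hd1 Hr1).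
  assert (Hq2 := common_snr_bounds d2 P2 r2 D2 ltac:(unfold D2; lra) HP2 Hd2 Hr2).
  assert (U1 := single_user_rate_bound (d1 * P1) ((1 - d1) * P1) _ D1 N HN
                  Ha1 Hx1 ltac:(unfold D1; lra) Hq1).
  assert (U2 := single_user_rate_bound (d2 * P2) ((1 - d2) * P2) _ D2 N HN
                  Ha2 Hx2 ltac:(unfold D2; lra) Hq2).
  assert (S := sum_rate_bound (d1 * P1) (d2 * P2) ((1 - d1) * P1) ((1 - d2) * P2)
                 _ _ D1 D2 N HN Ha1 Ha2 Hx1 Hx2
                 ltac:(unfold D1; nra) ltac:(unfold D2; nra) Hq1 Hq2).
  replace (d1 * P1 + (1 - d1) * P1) with P1 in U1 by ring.
  replace (d2 * P2 + (1 - d2) * P2) with P2 in U2 by ring.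
  replace (d1 * P1 + d2 * P2 + (1 - d1) * P1 + (1 - d2) * P2) with (P1 + P2) in S by ring.
  unfold C_MAC. repeat split; lra.
Qed.

Theorem mainTheorem14 (P1 P2 N s1 s2 : R) :
  0 < P1 -> 0 < P2 -> 0 < N ->
  0 <= s1 -> 0 <= s2 ->
  s1 >= P1 * (3 / 2 + P2 / N) ->
  s2 >= P2 * (3 / 2 + P1 / N) ->
  forall R1 R2 : R, R_Wil P1 P2 N s1 s2 R1 R2 <-> C_MAC P1 P2 N R1 R2.
Proof.
  intros HP1 HP2 HN _ _ H1 H2 R1 R2.
  assert (0 <= P1 / N) by (apply div_nonneg; lra).
  assert (0 <= P2 / N) by (apply div_nonneg; lra).
  assert (Hs1 : P1 <= s1) by nra.
  assert (Hs2 : P2 <= s2) by nra.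
  split.
  - apply R_Wil_included_C_MAC; lra.
  - apply C_MAC_included_R_Wil.
Qed.
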